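(* Let $0\le d\le N$ be integers. If $d=0$ or $d=N$ then $\dim\Lambda_{N,d}=0$; otherwise $\dim\Lambda_{N,d}=(d-1)(N-d-1)$.
   Context: For integers $0\le d\le N$, $\Lambda_{N,d}\subseteq\mathbb{R}^{d\times(N+1)}$ denotes the set of real matrices $\lambda=(\lambda_{i,n})$, with rows indexed by $1\le i\le d$ and columns indexed by $0\le n\le N$, satisfying: $\lambda_{i,0}=0$ for $1\le i\le d$; $\lambda_{i,N}=N$ for $1\le i\le d$; $\sum_{i=1}^d\lambda_{i,n}=dn$ for $0\le n\le N$; $\lambda_{i,n}\le\lambda_{i,n+1}$ for $1\le i\le d$, $0\le n<N$; $\lambda_{i,n}\le\lambda_{i-1,n-1}$ for $1<i\le d$, $0<n\le N$. (For $d=0$ this is the single empty $0\times(N+1)$ matrix.) The dimension of a polytope is the dimension of its affine hull. *)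

From HB Require Import structures.
From mathcomp Require Import all_boot all_order all_algebra.
Set Implicit Arguments. Unset Strict Implicit. Unset Printing Implicit Defensive.
Import Order.TTheory GRing.Theory Num.Theory.
Local Open Scope ring_scope.

(* Lambda_{N,d}: d x (N+1) matrices; row i (paper index 1..d) is 'I_d index i-1,
   column n (paper index 0..N) is 'I_(N.+1) index n. *)
Definition Lambda (R : realFieldType) (N d : nat) (lam : 'M[R]_(d, N.+1)) : Prop :=
  [/\ (forall i : 'I_d, lam i ord0 = 0),
      (forall i : 'I_d, lam i ord_max = N%:R),
      (forall n : 'I_N.+1, \sum_(i < d) lam i n = (d * n)%N%:R),
      (forall (i : 'I_d) (n n' : 'I_N.+1), val n' = (val n).+1 -> lam i n <= lam i n')
    & (forall (i i' : 'I_d) (n n' : 'I_N.+1),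
          val i = (val i').+1 -> val n = (val n').+1 -> lam i n <= lam i' n')].

(* The dimension of (the affine hull of) a nonempty set S of vectors is k:
   the direction space of the affine hull, i.e. the smallest subspace containing
   all differences x - y of points of S, has dimension k. *)
Definition aff_dim (R : fieldType) (vT : vectType R) (S : vT -> Prop) (k : nat) : Prop :=
  (exists x, S x) /\
  exists V : {vspace vT},
    [/\ (forall x y, S x -> S y -> x - y \in V),
        (forall W : {vspace vT}, (forall x y, S x -> S y -> x - y \in W) -> (V <= W)%VS)
      & \dim V = k].

From HB Require Import structures.
From mathcomp Require Import all_boot all_order all_algebra.
From mathcomp Require Import zify lra.
Set Implicit Arguments. Unset Strict Implicit. Unset Printing Implicit Defensive.
Import Order.TTheory GRing.Theory Num.Theory.

(* Write D = d and N = m + D, with rows r < D and columns n <= m + D.  The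
   monotonicity conditions force lambda r n = 0 for n <= r and lambda r n = N
   for n > m + r, leaving in each row the m free cells r < n <= m + r.  In
   column n the free cells form a run of rows ending at row min(n, D) - 1; the
   entry there is fixed by the column sum and the other free entries are
   independent parameters, (D - 1)(m - 1) of them.  Completing parameters by
   the column sums is an injective linear map whose image contains every
   difference of two points of Lambda.  Conversely, an integral point of
   Lambda satisfies every non-forced inequality strictly, so it can be moved
   in every direction of that image without leaving Lambda: the image is the
   direction space of the affine hull. *)

Ltac case_lia := repeat (case: ifP => ?); lia.

Definition free_cell (m r n : nat) := (r < n <= m + r)%N.
Definition param_cell (m D r n : nat) := [&& r.+2 <= n, n <= m + r & r.+2 <= D]%N.
Definition boundary_cell (m D r n : nat) := free_cell m r n && ~~ param_cell m D r n.

Lemma boundary_cell_uniq m D r r' n : (r < D)%N -> (r' < D)%N ->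
  boundary_cell m D r n -> boundary_cell m D r' n -> r = r'.
Proof. rewrite /boundary_cell /param_cell /free_cell; lia. Qed.

Lemma param_cell_boundary m D r n : (r < D)%N -> param_cell m D r n ->
  ((minn n D).-1 < D)%N && boundary_cell m D (minn n D).-1 n.
Proof. rewrite /boundary_cell /param_cell /free_cell; lia. Qed.

(* Within column n the free entries drop by 2 from row to row: this keeps every
   non-forced inequality strict while the column sum stays D n. *)
Definition interior_pt (m D r n : nat) : nat :=
  if n <= r then 0 else if m + r < n then m + D else n + D - r.*2 - 1.

Lemma sum_ord_indicator_ltn D n : \sum_(i < D) (if n <= i then 0 else 1) = minn D n.
Proof.
elim: D => [|D IH]; first by rewrite big_ord0 min0n.
rewrite big_ord_recr /= IH; case_lia.
Qed.

Lemma interior_pt_colsum m D n : n <= m + D -> \sum_(i < D) interior_pt m D i n = D * n.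
Proof.
elim: D n => [|D IH] n hn; first by rewrite big_ord0.
rewrite big_ord_recr /=.
have [hnD|hnD] := leqP n (m + D).
  rewrite (eq_bigr (fun i : 'I_D => interior_pt m D i n + (if n <= i then 0 else 1))).
    rewrite big_split /= IH // sum_ord_indicator_ltn /interior_pt; case_lia.
  move=> i _; rewrite /interior_pt; have := ltn_ord i; case_lia.
have -> : n = (m + D).+1 by lia.
rewrite (eq_bigr (fun _ => m + D.+1)); last first.
  move=> i _; rewrite /interior_pt; have := ltn_ord i; case_lia.
by rewrite sum_nat_const card_ord /interior_pt; case_lia.
Qed.

Lemma interior_pt_rowS m D r n : r < D -> n < m + D ->
  (interior_pt m D r n + 1 <= interior_pt m D r n.+1) ||
  [&& ~~ free_cell m r n, ~~ free_cell m r n.+1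
    & interior_pt m D r n <= interior_pt m D r n.+1].
Proof. rewrite /interior_pt /free_cell; case_lia. Qed.

Lemma interior_pt_diagS m D r n : r.+1 < D -> n < m + D ->
  (interior_pt m D r.+1 n.+1 + 1 <= interior_pt m D r n) ||
  [&& ~~ free_cell m r.+1 n.+1, ~~ free_cell m r n
    & interior_pt m D r.+1 n.+1 <= interior_pt m D r n].
Proof. rewrite /interior_pt /free_cell; case_lia. Qed.

Local Open Scope ring_scope.

Section ParamExtension.
Variables (R : realFieldType) (m D : nat).
Implicit Types (g : nat -> nat -> R).

(* g r j is the parameter placed in cell (r, r + j + 2). *)
Definition param_colsum g n :=
  \sum_(i < D) (if param_cell m D i n then g i (n - i.+2)%N else 0).

Definition param_ext g r n : R :=
  if param_cell m D r n then g r (n - r.+2)%N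
  else if free_cell m r n then - param_colsum g n else 0.

Lemma param_ext_out g r n : ~~ free_cell m r n -> param_ext g r n = 0.
Proof.
rewrite /param_ext /free_cell /param_cell => h; case: ifP; last by rewrite (negbTE h).
lia.
Qed.

(* A column containing a parameter cell has exactly one boundary cell, which
   cancels the parameters. *)
Lemma param_ext_colsum g n : \sum_(i < D) param_ext g i n = 0.
Proof.
rewrite (eq_bigr (fun i : 'I_D => (if param_cell m D i n then g i (n - i.+2)%N else 0) +
   (if boundary_cell m D i n then - param_colsum g n else 0))); last first.
  move=> i _; rewrite /param_ext /boundary_cell andbC.
  by case: ifP => _ /=; [rewrite addr0 | case: ifP => _; rewrite add0r].
rewrite big_split /= -/(param_colsum g n).
have [/existsP [i0 hi0]|no_bd] := boolP [exists i0 : 'I_D, boundary_cell m D i0 n].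
- rewrite (bigD1 i0) //= hi0 big1 ?addr0 ?subrr // => i hi.
  case: ifP => // hb; case/eqP: hi; apply/val_inj.
  exact: boundary_cell_uniq (ltn_ord i) (ltn_ord i0) hb hi0.
- rewrite big1 ?addr0 => [|i _]; last first.
    by case: ifP => // hb; case/negP: no_bd; apply/existsP; exists i.
  rewrite /param_colsum big1 // => i _; case: ifP => // hp.
  have /andP [h1 h2] := param_cell_boundary (ltn_ord i) hp.
  by case/negP: no_bd; apply/existsP; exists (Ordinal h1).
Qed.

Lemma eq_param_ext g g' r n :
  (forall i, param_cell m D i n -> g i (n - i.+2)%N = g' i (n - i.+2)%N) ->
  param_ext g r n = param_ext g' r n.
Proof.
move=> h; rewrite /param_ext /param_colsum; case: ifP => hp; first exact: h.
case: ifP => // _; congr (- _); apply: eq_bigr => i _; case: ifP => // hq; exact: h.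
Qed.

Lemma param_ext_linear g g1 g2 c r n : (forall i j, g i j = c * g1 i j + g2 i j) ->
  param_ext g r n = c * param_ext g1 r n + param_ext g2 r n.
Proof.
move=> h; rewrite /param_ext /param_colsum; case: ifP => _; first exact: h.
case: ifP => _; last by rewrite mulr0 addr0.
rewrite (eq_bigr (fun i : 'I_D => c * (if param_cell m D i n then g1 i (n - i.+2)%N else 0) +
   (if param_cell m D i n then g2 i (n - i.+2)%N else 0))).
  by rewrite big_split /= -mulr_sumr opprD mulrN.
by move=> i _; case: ifP => _; [apply: h | rewrite mulr0 addr0].
Qed.

Lemma param_extK (G : nat -> nat -> R) (r : 'I_D) n :
  (forall i, (i < D)%N -> ~~ free_cell m i n -> G i n = 0) ->
  \sum_(i < D) G i n = 0 ->
  param_ext (fun a b => G a (a + b.+2)%N) r n = G r n.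
Proof.
move=> G_out G_colsum; rewrite /param_ext.
case: ifP => hp; first by congr G; move: hp; rewrite /param_cell; lia.
case: ifP => hf; last by rewrite G_out // hf.
have hb : boundary_cell m D r n by rewrite /boundary_cell hp hf.
apply/eqP; rewrite eq_sym -subr_eq0 opprK -[0]G_colsum /param_colsum.
rewrite [X in _ == X](eq_bigr (fun i : 'I_D => (if param_cell m D i n then G i n else 0) +
   (if i == r then G i n else 0))); last first.
  move=> i _; case: ifP => hpi.
    by rewrite ifN ?addr0 //; apply: contraFN hp => /eqP <-.
  case: ifP => [/eqP -> | hir]; first by rewrite add0r.
  rewrite add0r; case: (boolP (free_cell m i n)) => hfi; last exact: G_out.
  have bi : boundary_cell m D i n by rewrite /boundary_cell hfi hpi.
  case/negP: (negbT hir); apply/eqP/val_inj.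
  exact: boundary_cell_uniq (ltn_ord i) (ltn_ord r) bi hb.
rewrite big_split /=.
have -> : \sum_(i < D) (if i == r then G i n else 0) = G r n.
  by rewrite -big_mkcond big_pred1_eq.
apply/eqP; rewrite addrC; congr (_ + _).
by apply: eq_bigr => i _; case: ifP => // hq; congr G; move: hq; rewrite /param_cell; lia.
Qed.

End ParamExtension.

Section LambdaFun.
Variable R : realFieldType.
Implicit Types (G : nat -> nat -> R).

Definition Lambda_fun m D G : Prop :=
  [/\ (forall r, (r < D)%N -> G r 0%N = 0),
      (forall r, (r < D)%N -> G r (m + D)%N = (m + D)%:R),
      (forall n, (n <= m + D)%N -> \sum_(i < D) G i n = (D * n)%:R),
      (forall r n, (r < D)%N -> (n < m + D)%N -> G r n <= G r n.+1)
    & (forall r n, (r.+1 < D)%N -> (n < m + D)%N -> G r.+1 n.+1 <= G r n)].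

Lemma Lambda_fun_entries m d' (l : 'M[R]_(d'.+1, (m + d'.+1).+1)) :
  Lambda l -> Lambda_fun m d'.+1 (fun r n => l (inord r) (inord n)).
Proof.
case=> l0 lN lsum lrow ldiag; split.
- move=> r _; have -> : inord 0 = ord0 :> 'I_(m + d'.+1).+1 by apply: ord_inj; rewrite inordK.
  exact: l0.
- move=> r _; have -> : inord (m + d'.+1) = ord_max :> 'I_(m + d'.+1).+1.
    by apply: ord_inj; rewrite inordK.
  exact: lN.
- move=> n hn; rewrite (eq_bigr (fun i : 'I_d'.+1 => l i (inord n))).
    by have := lsum (inord n); rewrite inordK ?ltnS.
  by move=> i _; rewrite inord_val.
- by move=> r n hr hn; apply: lrow; rewrite /= !inordK //; lia.
- by move=> r n hr hn; apply: ldiag; rewrite /= !inordK //; lia.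
Qed.

Lemma Lambda_matrix m D G : Lambda_fun m D G ->
  Lambda (\matrix_(i < D, j < (m + D).+1) G i j).
Proof.
case=> G0 GN Gsum Grow Gdiag; split.
- by move=> i; rewrite mxE; apply: G0.
- by move=> i; rewrite mxE; apply: GN.
- move=> n; rewrite (eq_bigr (fun i : 'I_D => G i n)) => [|i _]; last by rewrite mxE.
  by apply: Gsum; rewrite -ltnS.
- move=> i n n' /= e; rewrite !mxE e; apply: Grow => //; have := ltn_ord n'; lia.
- move=> i i' n n' /= ei en; rewrite !mxE ei en; apply: Gdiag; first by rewrite -ei.
  have := ltn_ord n; lia.
Qed.

Section Forced.
Variables (m D : nat) (G : nat -> nat -> R).
Hypothesis hG : Lambda_fun m D G.

Lemma Lambda_fun_mono r n n' : (r < D)%N -> (n <= n' <= m + D)%N -> G r n <= G r n'.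
Proof.
case: hG => _ _ _ Grow _ hr; elim: n' => [|n' IH] hn.
  by have -> : n = 0%N by lia.
have [->|hne] := eqVneq n n'.+1; first by [].
apply: le_trans (IH _) (Grow _ _ hr _); lia.
Qed.

Lemma Lambda_fun_lower r n : (r < D)%N -> (n <= r)%N -> G r n = 0.
Proof.
case: hG => G0 _ _ _ Gdiag; elim: n r => [|n IH] r hr hn; first exact: G0.
apply/le_anti/andP; split; last by rewrite -(G0 r hr); apply: Lambda_fun_mono => //; lia.
case: r hr hn => [|r] hr hn //.
rewrite -(IH r) //; [apply: Gdiag | ]; lia.
Qed.

Lemma Lambda_fun_upper r n : (r < D)%N -> (m + r < n <= m + D)%N -> G r n = (m + D)%:R.
Proof.
case: hG => _ GN _ _ Gdiag hr hn.
have [k hk] : exists k, (n + k = m + D)%N by exists (m + D - n)%N; lia.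
elim: k r n hk hr hn => [|k IH] r n hk hr hn.
  by rewrite addn0 in hk; rewrite hk; apply: GN.
apply/le_anti/andP; split; first by rewrite -(GN r hr); apply: Lambda_fun_mono => //; lia.
rewrite -(IH r.+1 n.+1); [apply: Gdiag | | |]; lia.
Qed.

Lemma Lambda_fun_forced r n : (r < D)%N -> (n <= m + D)%N -> ~~ free_cell m r n ->
  G r n = if (n <= r)%N then 0 else (m + D)%:R.
Proof.
move=> hr hn; rewrite /free_cell; case: ifP => h1 h2; first exact: Lambda_fun_lower.
apply: Lambda_fun_upper; lia.
Qed.

End Forced.

Lemma ler_perturbed_nat (a b : nat) (va vb : R) :
  `|va| <= 2^-1 -> `|vb| <= 2^-1 ->
  (a + 1 <= b)%N || [&& va == 0, vb == 0 & (a <= b)%N] ->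
  a%:R + va <= b%:R + vb.
Proof.
rewrite !ler_norml => /andP [h1 h2] /andP [h3 h4] /orP [h|/and3P [/eqP -> /eqP -> h]].
  have : (a + 1)%:R <= b%:R :> R by rewrite ler_nat.
  rewrite natrD; lra.
by rewrite !addr0 ler_nat.
Qed.

Definition perturbed m D (t : R) (P : nat -> nat -> R) : 'M[R]_(D, (m + D).+1) :=
  \matrix_(i, j) ((interior_pt m D i j)%:R + t * P i j).

Lemma perturbed_Lambda m D t (P : nat -> nat -> R) :
  (forall r n, ~~ free_cell m r n -> P r n = 0) ->
  (forall n, \sum_(i < D) P i n = 0) ->
  (forall r n, (r < D)%N -> (n <= m + D)%N -> `|t * P r n| <= 2^-1) ->
  Lambda (perturbed m D t P).
Proof.
move=> P_out P_colsum P_small.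
apply: (@Lambda_matrix m D (fun r n => (interior_pt m D r n)%:R + t * P r n)); split.
- by move=> r hr /=; rewrite P_out ?mulr0 ?addr0.
- move=> r hr /=; rewrite P_out ?mulr0 ?addr0 /free_cell; last lia.
  by congr _%:R; rewrite /interior_pt; case_lia.
- move=> n hn /=.
  by rewrite big_split /= -natr_sum interior_pt_colsum // -mulr_sumr P_colsum mulr0 addr0.
- move=> r n hr hn /=; apply: ler_perturbed_nat; [apply: P_small; lia..|].
  case/orP: (interior_pt_rowS hr hn) => [->//|/and3P [f1 f2 ->]].
  by rewrite !P_out // mulr0 eqxx orbT.
- move=> r n hr hn /=; apply: ler_perturbed_nat; [apply: P_small; lia..|].
  case/orP: (interior_pt_diagS hr hn) => [->//|/and3P [f1 f2 ->]].
  by rewrite !P_out // mulr0 eqxx orbT.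
Qed.

Lemma Lambda_nonempty m D : exists x : 'M[R]_(D, (m + D).+1), Lambda x.
Proof.
exists (perturbed m D 0 (fun _ _ => 0)); apply: perturbed_Lambda => //.
- by move=> n; rewrite big1.
- by move=> *; rewrite mulr0 normr0 invr_ge0 ler0n.
Qed.

End LambdaFun.

Lemma perturbed_subr (R : realFieldType) m D t (P : nat -> nat -> R) :
  perturbed m D t P - perturbed m D 0 P = t *: \matrix_(i, j) P i j.
Proof. by apply/matrixP => i j; rewrite !mxE mul0r addr0 addrAC subrr add0r. Qed.

Lemma exists_small_scale (R : realFieldType) a b (M : 'M[R]_(a, b)) :
  exists2 t : R, 0 < t & forall i j, `|t * M i j| <= 2^-1.
Proof.
pose S := \sum_i \sum_j `|M i j|.
have S_ge0 : 0 <= S by do 2 apply: sumr_ge0 => ? _.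
have M_le_S i j : `|M i j| <= S.
  rewrite /S (bigD1 i) //= (bigD1 j) //= -addrA lerDl.
  by apply: addr_ge0; do ?apply: sumr_ge0 => ? _.
have S2_gt0 : 0 < 2 * (1 + S) by lra.
exists (2 * (1 + S))^-1 => [|i j]; first by rewrite invr_gt0.
rewrite normrM gtr0_norm ?invr_gt0 // mulrC ler_pdivrMr //.
have := M_le_S i j; lra.
Qed.

Section ParamMatrix.
Variable R : realFieldType.

Definition entry a b (x : 'M[R]_(a, b)) (i j : nat) : R :=
  match (insub i : option 'I_a), (insub j : option 'I_b) with
  | Some i', Some j' => x i' j'
  | _, _ => 0
  end.

Lemma entryE a b (x : 'M[R]_(a, b)) i j (hi : (i < a)%N) (hj : (j < b)%N) :
  entry x i j = x (Ordinal hi) (Ordinal hj).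
Proof. by rewrite /entry (@insubT _ _ 'I_a i hi) (@insubT _ _ 'I_b j hj). Qed.

Lemma entry_lin a b (x y : 'M[R]_(a, b)) c i j :
  entry (c *: x + y) i j = c * entry x i j + entry y i j.
Proof.
rewrite /entry; case: (insub i : option 'I_a) => [i'|]; case: (insub j : option 'I_b) => [j'|];
  by rewrite ?mxE ?mulr0 ?addr0.
Qed.

(* Row d' of Lambda carries no parameter cell, and row r < d' carries the m - 1
   cells r + 2 <= n <= m + r. *)
Definition param_mx m d' (x : 'M[R]_(d', m - 1)) : 'M[R]_(d'.+1, (m + d'.+1).+1) :=
  \matrix_(r, n) param_ext m d'.+1 (entry x) r n.

Lemma param_mx_is_linear m d' : linear (@param_mx m d').
Proof.
move=> c x y; apply/matrixP => r n; rewrite !mxE.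
by apply: param_ext_linear => i j; rewrite entry_lin.
Qed.

End ParamMatrix.

HB.instance Definition _ (R : realFieldType) m d' :=
  GRing.isLinear.Build R 'M[R]_(d', m - 1) 'M[R]_(d'.+1, (m + d'.+1).+1) *:%R
    (@param_mx R m d') (@param_mx_is_linear R m d').

Lemma param_mx_entry (R : realFieldType) m d' (x : 'M[R]_(d', m - 1)) (i : 'I_d') (j : 'I_(m - 1)) :
  param_mx x (inord i) (inord (i + j.+2)) = x i j.
Proof.
have hi := ltn_ord i; have hj := ltn_ord j.
rewrite mxE !inordK /param_ext; [| lia | lia].
have -> : param_cell m d'.+1 i (i + j.+2) by rewrite /param_cell; lia.
have -> : (i + j.+2 - i.+2 = j)%N by lia.
by rewrite (entryE x hi hj); congr (x _ _); apply: val_inj.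
Qed.

Lemma param_mx_inj (R : realFieldType) m d' : injective (@param_mx R m d').
Proof.
move=> x y /matrixP hxy; apply/matrixP => i j.
by rewrite -(param_mx_entry x) hxy param_mx_entry.
Qed.

Section Direction.
Variables (R : realFieldType) (m d' : nat).

Definition param_hom : 'Hom('M[R]_(d', m - 1), 'M[R]_(d'.+1, (m + d'.+1).+1)) :=
  linfun (@param_mx R m d').

Lemma Lambda_subr_in_param_img x y : Lambda x -> Lambda y -> x - y \in limg param_hom.
Proof.
move=> /Lambda_fun_entries Lx /Lambda_fun_entries Ly.
pose H (a n : nat) := x (inord a) (inord n) - y (inord a) (inord n).
pose u : 'M[R]_(d', m - 1) := \matrix_(i, j) H i (i + j.+2)%N.
suff -> : x - y = param_hom u by apply: memv_img; rewrite memvf.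
apply/matrixP => r n; rewrite lfunE !mxE.
rewrite (@eq_param_ext _ _ _ _ (fun a b => H a (a + b.+2)%N)) => [|i hp]; last first.
  have hi : (i < d')%N by move: hp; rewrite /param_cell; lia.
  have hj : (n - i.+2 < m - 1)%N by move: hp; rewrite /param_cell; lia.
  by rewrite (entryE u hi hj) mxE.
have hn : (n <= m + d'.+1)%N by rewrite -ltnS.
rewrite param_extK; first by rewrite /H !inord_val.
- move=> i hi hf.
  by rewrite /H (Lambda_fun_forced Lx) ?(Lambda_fun_forced Ly) ?subrr.
- case: Lx => _ _ sx _ _; case: Ly => _ _ sy _ _.
  by rewrite /H sumrB sx // sy // subrr.
Qed.

Lemma perturbed_param_Lambda (t : R) (u : 'M[R]_(d', m - 1)) :
  (forall i j, `|t * param_mx u i j| <= 2^-1) ->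
  Lambda (perturbed m d'.+1 t (param_ext m d'.+1 (entry u))).
Proof.
move=> small; apply: perturbed_Lambda.
- exact: param_ext_out.
- exact: param_ext_colsum.
- move=> r n hr hn; have := small (inord r) (inord n).
  by rewrite mxE !inordK.
Qed.

Lemma param_img_minimal (W : {vspace 'M[R]_(d'.+1, (m + d'.+1).+1)}) :
  (forall x y, Lambda x -> Lambda y -> x - y \in W) -> (limg param_hom <= W)%VS.
Proof.
move=> hW; apply/subvP => _ /memv_imgP [u _ ->]; rewrite lfunE /=.
have [t t_gt0 t_small] := exists_small_scale (param_mx u).
have L0 : Lambda (perturbed m d'.+1 0 (param_ext m d'.+1 (entry u))).
  by apply: perturbed_param_Lambda => i j; rewrite mul0r normr0 invr_ge0.
have /(memvZ t^-1) := hW _ _ (perturbed_param_Lambda t_small) L0.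
by rewrite perturbed_subr scalerA mulVf ?gt_eqF // scale1r.
Qed.

Lemma dim_param_img : \dim (limg param_hom) = (d' * (m - 1))%N.
Proof.
rewrite limg_dim_eq ?dimvf ?dim_matrix // capfv; apply/eqP/lker0P => x y.
by rewrite !lfunE; apply: param_mx_inj.
Qed.

End Direction.

Local Close Scope ring_scope.

Theorem theorem3p2 (R : realFieldType) (N d : nat) (hdN : (d <= N)%N) :
  aff_dim (@Lambda R N d)
    (if (d == 0%N) || (d == N) then 0%N else ((d - 1) * (N - d - 1))%N).
Proof.
have [m ->] : exists m, N = m + d by exists (N - d); rewrite subnK.
split; first exact: Lambda_nonempty.
case: d {hdN} => [|d'].
  exists 0%VS; split=> [x y _ _ | W _ |]; last by rewrite dimv0.
    by rewrite memv0 [(x - y)%R]flatmx0.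
  exact: sub0v.
have -> : (if (d'.+1 == 0) || (d'.+1 == m + d'.+1) then 0
   else (d'.+1 - 1) * (m + d'.+1 - d'.+1 - 1)) = d' * (m - 1) by case: ifP; lia.
exists (limg (param_hom R m d')); split.
- exact: Lambda_subr_in_param_img.
- exact: param_img_minimal.
- exact: dim_param_img.
Qed.
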